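(* Consider the disclosure model described in the context. Any full-disclosure policy $d$ is Pareto efficient and satisfies $\Pi(d)\ge\Pi(d')$ for every $d'\in\mathcal{D}$.
   Context: Emissions lie in $E=[0,\bar e]$ with $\bar e>0$. The firm's type $\theta\in\Theta=[\underline\theta,\bar\theta]$ is private information with a continuous density $f=F'$ on $\Theta$. The firm's profit is $\tilde\pi(\theta,e,\tilde e)$ with actual emission $e$ and market-perceived emission $\tilde e$; it is strictly increasing in $e$ and strictly decreasing in $\tilde e$. Standing assumptions: $\tilde\pi$ is continuous on $\Theta\times E\times E$ and $C^2$ on its interior; $\pi(\theta,e):=\tilde\pi(\theta,e,e)$ is strictly concave in $e$; and $\pi(\theta,0)<\pi(\theta,\bar e)$ for all $\theta$. A disclosure policy is a function $d:E\to E$ (a partition of $E$ into level sets). An emission $e$ is belief-compatible under $d$ if $e\ge e'$ whenever $d(e')=d(e)$; $\tilde E_d$ is the set of such levels. The type-$\theta$ firm chooses $e\in\tilde E_d$ maximizing $\pi(\theta,e)$. $\mathcal{D}$ is the set of policies for which the maximum is attained for every type. For $d\in\mathcal{D}$, $\pi_d(\theta)=\max_{e\in\tilde E_d}\pi(\theta,e)$, and $\gamma_d(\theta)$ is the lowest maximizer. Further, $\Pi(d)=\int_\Theta\pi_d\,dF$ and $\Gamma(d)=\int_\Theta\gamma_d\,dF$. A policy $d\in\mathcal{D}$ is Pareto efficient if there is no $d'\in\mathcal{D}$ with $\Pi(d')\ge\Pi(d)$ and $\Gamma(d')\le\Gamma(d)$, at least one inequality strict. Let $\hat{\mathbf e}(\theta):=\arg\max_{e\in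 E}\pi(\theta,e)$. A full-disclosure policy is a policy $d$ such that, for every $e\in\hat{\mathbf e}(\Theta)$, $e$ is alone in its cell: $d(e')=d(e)$ implies $e'=e$. Such a policy belongs to $\mathcal{D}$. *)

From HB Require Import structures.
From mathcomp Require Import all_boot all_order all_algebra.
From mathcomp Require Import all_classical all_reals all_analysis.
Set Implicit Arguments. Unset Strict Implicit. Unset Printing Implicit Defensive.
Import Order.TTheory GRing.Theory Num.Theory.
Import numFieldNormedType.Exports.
Local Open Scope classical_set_scope.
Local Open Scope ring_scope.

Section Disclosure.
Variable R : realType.

Definition Eset (ebar : R) : set R := `[0, ebar].
Definition Thset (thl thh : R) : set R := `[thl, thh].

Definition pi_diag (pt : R -> R -> R -> R) (th e : R) : R := pt th e e.

Definition pt3 (pt : R -> R -> R -> R) (p : (R * R) * R) : R := pt p.1.1 p.1.2 p.2.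

Definition C2_on (V : normedModType R) (U : set V) (g : V -> R) : Prop :=
  forall u v : V,
    (forall x, U x -> derivable g x u /\ derivable ('D_u g) x v) /\
    {in U, continuous ('D_u g)} /\ {in U, continuous ('D_v ('D_u g))}.

Definition is_policy (ebar : R) (d : R -> R) : Prop :=
  forall e, e \in Eset ebar -> d e \in Eset ebar.

Definition belief_compatible (ebar : R) (d : R -> R) (e : R) : Prop :=
  forall e', e' \in Eset ebar -> d e' = d e -> e' <= e.

Definition Etilde (ebar : R) (d : R -> R) : set R :=
  [set e | e \in Eset ebar /\ belief_compatible ebar d e].

Definition in_Dcal (pt : R -> R -> R -> R) (thl thh ebar : R) (d : R -> R) : Prop :=
  is_policy ebar d /\
  forall th, th \in Thset thl thh ->
    exists2 e, Etilde ebar d e &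
      forall e', Etilde ebar d e' -> pi_diag pt th e' <= pi_diag pt th e.

(* pi_d(theta) = max_{e in tilde E_d} pi(theta, e) (a sup, equal to the max for d in D) *)
Definition pi_d (pt : R -> R -> R -> R) (ebar : R) (d : R -> R) (th : R) : R :=
  sup [set pi_diag pt th e | e in Etilde ebar d].

(* gamma_d(theta) = lowest maximizer (an inf of the maximizers, equal to the
   minimum for d in D) *)
Definition gamma_d (pt : R -> R -> R -> R) (ebar : R) (d : R -> R) (th : R) : R :=
  inf [set e | Etilde ebar d e /\ pi_diag pt th e = pi_d pt ebar d th].

(* Pi(d) = \int pi_d dF and Gamma(d) = \int gamma_d dF, with dF = f dtheta *)
Definition Pi_of (pt : R -> R -> R -> R) (f : R -> R) (thl thh ebar : R)
    (d : R -> R) : \bar R :=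
  (\int[lebesgue_measure]_(t in `[thl, thh]) (pi_d pt ebar d t * f t)%:E)%E.

Definition Gamma_of (pt : R -> R -> R -> R) (f : R -> R) (thl thh ebar : R)
    (d : R -> R) : \bar R :=
  (\int[lebesgue_measure]_(t in `[thl, thh]) (gamma_d pt ebar d t * f t)%:E)%E.

Definition pareto_efficient (pt : R -> R -> R -> R) (f : R -> R) (thl thh ebar : R)
    (d : R -> R) : Prop :=
  in_Dcal pt thl thh ebar d /\
  ~ (exists d', in_Dcal pt thl thh ebar d' /\
       (Pi_of pt f thl thh ebar d <= Pi_of pt f thl thh ebar d')%E /\
       (Gamma_of pt f thl thh ebar d' <= Gamma_of pt f thl thh ebar d)%E /\
       ((Pi_of pt f thl thh ebar d < Pi_of pt f thl thh ebar d')%E \/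
        (Gamma_of pt f thl thh ebar d' < Gamma_of pt f thl thh ebar d)%E)).

Definition in_hat_image (pt : R -> R -> R -> R) (thl thh ebar : R) (e : R) : Prop :=
  exists2 th, th \in Thset thl thh &
    e \in Eset ebar /\ forall e', e' \in Eset ebar -> pi_diag pt th e' <= pi_diag pt th e.

Definition full_disclosure (pt : R -> R -> R -> R) (thl thh ebar : R) (d : R -> R) : Prop :=
  is_policy ebar d /\
  forall e, in_hat_image pt thl thh ebar e ->
    forall e', e' \in Eset ebar -> d e' = d e -> e' = e.

End Disclosure.

(* Under full disclosure every unconstrained maximiser of pi(theta, .) is alone
   in its cell, hence belief-compatible, so pi_d(theta) is the unconstrained
   maximum of pi(theta, .) and dominates pi_d'(theta) for every d' in D;
   integrating against f >= 0 gives Pi(d') <= Pi(d).  If also Pi(d') >= Pi(d),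
   then pi_d' f = pi_d f almost everywhere.  Where f(theta) > 0, every
   d'-optimal emission then attains the unconstrained maximum, so it is
   d-optimal and gamma_d(theta) <= gamma_d'(theta); hence Gamma(d) <= Gamma(d')
   and d' is no Pareto improvement on d. *)

From HB Require Import structures.
From mathcomp Require Import all_boot all_order all_algebra.
From mathcomp Require Import all_classical all_reals all_analysis.
From mathcomp Require Import measurable_realfun.
Import Order.TTheory GRing.Theory Num.Theory.
Import numFieldNormedType.Exports.
Set Implicit Arguments. Unset Strict Implicit. Unset Printing Implicit Defensive.
Local Open Scope classical_set_scope.
Local Open Scope ring_scope.

Lemma continuous_within_comp {U V W : topologicalType} (A : set U) (B : set V)
    (f : U -> V) (g : V -> W) :
  f @` A `<=` B -> {within A, continuous f} -> {within B, continuous g} ->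
  {within A, continuous (g \o f)}.
Proof.
move=> fAB /subspace_continuousP cf /subspace_continuousP cg.
apply/subspace_continuousP => x Ax.
have Bfx : B (f x) by apply: fAB; exists x.
have fB : f @ within A (nbhs x) --> within B (nbhs (f x)).
  move=> P /= BP; have := cf x Ax _ BP; rewrite !nbhs_simpl /= => nBP.
  apply: filterS2 (withinT A (nbhs_filter x)) nBP => y Ay BPy.
  by apply: BPy; apply: fAB; exists y.
exact: cvg_trans (cvg_app g fB) (cg _ Bfx).
Qed.

Lemma sup_attained (R : realType) (A : set R) (a : R) :
  A a -> ubound A a -> sup A = a.
Proof.
move=> Aa ub; apply/le_anti/andP; split; first by apply: ge_sup => //; exists a.
by apply: sup_upper_bound => //; split; exists a.
Qed.

Lemma lower_semicontinuous_within_measurable (R : realType) (D : set R)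
    (g : R -> R) : measurable D ->
  (forall x a, D x -> a < g x -> \forall y \near x, D y -> a < g y) ->
  measurable_fun D g.
Proof.
move=> mD lsc; apply: (measurability _ (RGenOInfty.measurableE R)) => //.
move=> /= _ [_ [a ->] <-].
have -> : D `&` g @^-1` `]a, +oo[ = D `&` [set y | D y -> a < g y]°.
  apply/seteqP; split => x [Dx].
    by rewrite /= in_itv /= andbT => /(lsc x a Dx).
  move=> /interior_subset agx; split => //=.
  by rewrite in_itv /= andbT; exact: agx.
by apply: measurableI => //; apply: open_measurable; exact: open_interior.
Qed.

Section ae_integral.
Context d (T : measurableType d) (R : realType) (mu : {measure set T -> \bar R}).
Local Open Scope ereal_scope.
Import HBNNSimple.

(* Unlike [ae_ge0_le_integral], no measurability is required: the nonnegative
   integral is a supremum over simple minorants, and gamma_d need not be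
   measurable. *)
Lemma ae_ge0_le_integral_nonmeasurable (D : set T) (f1 f2 : T -> \bar R) :
  (forall x, D x -> 0 <= f1 x) -> (forall x, D x -> 0 <= f2 x) ->
  {ae mu, forall x, D x -> f1 x <= f2 x} ->
  \int[mu]_(x in D) f1 x <= \int[mu]_(x in D) f2 x.
Proof.
move=> f10 f20 [N [mN N0 f12N]].
rewrite (ge0_integralE mu f10) (ge0_integralE mu f20) /=.
apply: ge_ereal_sup => _ [h /= hf1 <-].
have mNC : measurable (~` N) by exact: measurableC.
pose h' := proj_nnsfun h mNC.
apply: (@le_trans _ _ (sintegral mu h')).
  rewrite -!integralT_nnsfun le_eqVlt; apply/orP; left; apply/eqP.
  apply: ae_eq_integral => //; [exact/measurable_EFinP/measurable_funPT..|].
  apply: (@negligibleS _ _ _ mu N); last exact/negligibleP.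
  move=> x /= hh'x; apply: contrapT => Nx; apply: hh'x => _.
  by rewrite /= mindicE (_ : x \in ~` N) ?mulr1 //; exact: mem_set.
apply: ereal_sup_ubound; exists h' => // x; rewrite /= mindicE.
have f2D0 : 0 <= (f2 \_ D) x by rewrite patchE; case: ifPn => // /set_mem /f20.
case: (boolP (x \in ~` N)) => [/set_mem Nx|_]; last by rewrite mulr0.
rewrite mulr1; apply: (le_trans (hf1 x)); rewrite !patchE.
by case: ifPn => // /set_mem Dx; apply: contrapT => f12x; apply/Nx/f12N => /(_ Dx).
Qed.

Lemma le_integral_ae_eq (D : set T) (f g : T -> R) : measurable D ->
  mu.-integrable D (EFin \o f) -> mu.-integrable D (EFin \o g) ->
  (forall x, D x -> (f x <= g x)%R) ->
  \int[mu]_(x in D) (g x)%:E <= \int[mu]_(x in D) (f x)%:E ->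
  {ae mu, forall x, D x -> f x = g x}.
Proof.
move=> mD intf intg fg gf.
have int_eq : \int[mu]_(x in D) (f x)%:E = \int[mu]_(x in D) (g x)%:E.
  by apply/le_anti; rewrite gf andbT; apply: le_integral => // x /set_mem /fg.
have : \int[mu]_(x in D) `|((g x - f x)%R)%:E| = 0.
  transitivity (\int[mu]_(x in D) ((g x)%:E - (f x)%:E)).
    by apply: eq_integral => x /set_mem Dx; rewrite gee0_abs // lee_fin subr_ge0 fg.
  rewrite integralB_EFin // int_eq subee //.
  exact: integrable_fin_num intg.
have mgf : measurable_fun D (EFin \o (g \- f)%R).
  apply/measurable_EFinP/measurable_funB; apply/measurable_EFinP.
  - exact: measurable_int intg.
  - exact: measurable_int intf.
move/(ae_eq_integral_abs mu mD mgf); apply: filterS => x gf0 Dx.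
by apply/eqP; rewrite eq_sym -subr_eq0; apply/eqP; case: (gf0 Dx).
Qed.

End ae_integral.

Section policies.
Variables (R : realType) (pt : R -> R -> R -> R) (thl thh ebar : R).

Lemma pi_d_max d th e : Etilde ebar d e ->
  (forall e', Etilde ebar d e' -> pi_diag pt th e' <= pi_diag pt th e) ->
  pi_d pt ebar d th = pi_diag pt th e.
Proof.
move=> de emax; apply: sup_attained; first by exists e.
by move=> _ [e' de' <-]; exact: emax.
Qed.

Lemma in_Dcal_pi_d d th : in_Dcal pt thl thh ebar d -> th \in Thset thl thh ->
  exists2 e, Etilde ebar d e & pi_d pt ebar d th = pi_diag pt th e.
Proof.
by move=> [_ argmax] /argmax [e de emax]; exists e => //; exact: pi_d_max.
Qed.

Lemma in_Dcal_le_pi_d d th e : in_Dcal pt thl thh ebar d ->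
  th \in Thset thl thh -> Etilde ebar d e -> pi_diag pt th e <= pi_d pt ebar d th.
Proof.
move=> [_ argmax] /argmax [e0 de0 e0max] de.
by rewrite (pi_d_max de0 e0max); exact: e0max.
Qed.

Lemma gamma_d_ge0 d th : in_Dcal pt thl thh ebar d -> th \in Thset thl thh ->
  0 <= gamma_d pt ebar d th.
Proof.
move=> Dd Th; apply: lb_le_inf.
  by have [e de pe] := in_Dcal_pi_d Dd Th; exists e.
by move=> e [[/set_mem /= /andP[]]].
Qed.

End policies.

Section full_disclosure.
Variables (R : realType) (pt : R -> R -> R -> R) (thl thh ebar : R).

Definition profit_domain : set ((R * R) * R) :=
  [set p | p.1.1 \in Thset thl thh /\ p.1.2 \in Eset ebar /\ p.2 \in Eset ebar].

Hypothesis ebar_ge0 : 0 <= ebar.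
Hypothesis pt_cont : {within profit_domain, continuous (pt3 pt)}.

Lemma pi_diag_continuous_e th : th \in Thset thl thh ->
  {within `[0, ebar], continuous (pi_diag pt th)}.
Proof.
move=> Th; apply: (@continuous_within_comp _ _ _ _ profit_domain
  (fun e => ((th, e), e)) (pt3 pt)) => //.
- by move=> _ [e Ee <-]; split => //; split; exact: mem_set.
- apply: continuous_subspaceT => e.
  exact: cvg_pair (cvg_pair (cvg_cst th) cvg_id) cvg_id.
Qed.

Lemma pi_diag_continuous_th e : e \in Eset ebar ->
  {within `[thl, thh], continuous (pi_diag pt ^~ e)}.
Proof.
move=> Ee; apply: (@continuous_within_comp _ _ _ _ profit_domain
  (fun th => ((th, e), e)) (pt3 pt)) => //.
- by move=> _ [th Th <-]; split => //; exact: mem_set.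
- apply: continuous_subspaceT => th.
  exact: cvg_pair (cvg_pair cvg_id (cvg_cst e)) (cvg_cst e).
Qed.

Lemma pi_diag_bounded : exists C, forall th e, th \in Thset thl thh ->
  e \in Eset ebar -> `|pi_diag pt th e| <= C.
Proof.
have domE : profit_domain = (`[thl, thh] `*` `[0, ebar]) `*` `[0, ebar].
  by apply/seteqP; split => -[[th e] e']; rewrite /profit_domain /= !in_setE;
    [move=> [? [? ?]] | move=> [[? ?] ?]].
have cdom : compact profit_domain.
  by rewrite domE; apply: compact_setX; [apply: compact_setX|];
    exact: segment_compact.
have [M [_ HM]] := compact_bounded (continuous_compact pt_cont cdom).
exists (M + 1) => th e Th Ee; apply: (HM (M + 1)); first by rewrite ltrDl.
by exists ((th, e), e).
Qed.

Lemma exists_argmax th : th \in Thset thl thh -> exists2 e, e \in Eset ebar &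
  forall e', e' \in Eset ebar -> pi_diag pt th e' <= pi_diag pt th e.
Proof.
move=> Th; have [e Ee emax] := EVT_max ebar_ge0 (pi_diag_continuous_e Th).
by exists e; [rewrite in_setE | move=> e' /set_mem /emax].
Qed.

Lemma pi_d_lower_semicontinuous d : in_Dcal pt thl thh ebar d ->
  forall th0 a, Thset thl thh th0 -> a < pi_d pt ebar d th0 ->
  \forall th \near th0, Thset thl thh th -> a < pi_d pt ebar d th.
Proof.
move=> Dd th0 a Th0; have [e [Ee de] ->] := in_Dcal_pi_d Dd (mem_set Th0).
move=> a_lt; have := pi_diag_continuous_th Ee.
move/subspace_continuousP/(_ th0 Th0)/cvgr_gt/(_ a a_lt).
rewrite near_withinE; apply: filterS => th a_lt_th Th.
exact: lt_le_trans (a_lt_th Th) (in_Dcal_le_pi_d Dd (mem_set Th) (conj Ee de)).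
Qed.

Lemma measurable_pi_d d : in_Dcal pt thl thh ebar d ->
  measurable_fun (Thset thl thh) (pi_d pt ebar d).
Proof.
move=> Dd; apply: lower_semicontinuous_within_measurable.
  exact: measurable_itv.
exact: pi_d_lower_semicontinuous.
Qed.

Lemma bounded_pi_d d : in_Dcal pt thl thh ebar d ->
  [bounded pi_d pt ebar d th | th in Thset thl thh].
Proof.
move=> Dd; have [C piC] := pi_diag_bounded.
exists C; split; first exact: num_real.
move=> M /ltW CM th Th; apply: le_trans CM.
by have [e [Ee _] ->] := in_Dcal_pi_d Dd (mem_set Th); exact: piC (mem_set Th) Ee.
Qed.

Variable f : R -> R.
Hypothesis f_cont : {within Thset thl thh, continuous f}.

Lemma integrable_pi_d d : in_Dcal pt thl thh ebar d ->
  lebesgue_measure.-integrable (Thset thl thh)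
    (fun th => (pi_d pt ebar d th * f th)%:E).
Proof.
move=> Dd; have intf := continuous_compact_integrable (@segment_compact R thl thh) f_cont.
have := integrableMl _ intf (measurable_pi_d Dd) (bounded_pi_d Dd).
move=> /(_ (measurable_itv _)).
by apply: eq_integrable => // th _; rewrite /= -EFinM mulrC.
Qed.

Hypothesis f_ge0 : forall th, th \in Thset thl thh -> 0 <= f th.

Variable d : R -> R.
Hypothesis fd : full_disclosure pt thl thh ebar d.

Lemma full_disclosure_Etilde th e : th \in Thset thl thh -> e \in Eset ebar ->
  (forall e', e' \in Eset ebar -> pi_diag pt th e' <= pi_diag pt th e) ->
  Etilde ebar d e.
Proof.
move=> Th Ee emax; split => // e' Ee' de'.
by rewrite (fd.2 e _ e' Ee' de') //; exists th.
Qed.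

Lemma full_disclosure_in_Dcal : in_Dcal pt thl thh ebar d.
Proof.
split=> [|th Th]; first exact: fd.1.
have [e Ee emax] := exists_argmax Th; exists e.
  exact: full_disclosure_Etilde emax.
by move=> e' [Ee' _]; exact: emax.
Qed.

Lemma full_disclosure_le_pi_d th e : th \in Thset thl thh -> e \in Eset ebar ->
  pi_diag pt th e <= pi_d pt ebar d th.
Proof.
move=> Th Ee; have [e0 Ee0 e0max] := exists_argmax Th.
apply: le_trans (e0max _ Ee) _.
exact: in_Dcal_le_pi_d full_disclosure_in_Dcal Th (full_disclosure_Etilde Th Ee0 e0max).
Qed.

Lemma pi_d_le_full_disclosure d' th : in_Dcal pt thl thh ebar d' ->
  th \in Thset thl thh -> pi_d pt ebar d' th <= pi_d pt ebar d th.
Proof.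
move=> Dd Th; have [e [Ee _] ->] := in_Dcal_pi_d Dd Th.
exact: full_disclosure_le_pi_d.
Qed.

Lemma gamma_d_le_full_disclosure d' th : in_Dcal pt thl thh ebar d' ->
  th \in Thset thl thh -> pi_d pt ebar d' th = pi_d pt ebar d th ->
  gamma_d pt ebar d th <= gamma_d pt ebar d' th.
Proof.
move=> Dd Th pi_eq; apply: lb_le_inf.
  by have [e de pe] := in_Dcal_pi_d Dd Th; exists e.
move=> e [[Ee _] pe]; apply: ge_inf.
  by exists 0 => e' [[/set_mem /= /andP[]]].
split; last by rewrite pe pi_eq.
apply: (full_disclosure_Etilde Th Ee) => e' Ee'.
by rewrite pe pi_eq; exact: full_disclosure_le_pi_d.
Qed.

Local Open Scope ereal_scope.

Lemma Pi_le_full_disclosure d' : in_Dcal pt thl thh ebar d' ->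
  Pi_of pt f thl thh ebar d' <= Pi_of pt f thl thh ebar d.
Proof.
move=> Dd; apply: le_integral.
- exact: measurable_itv.
- exact: integrable_pi_d.
- exact: integrable_pi_d full_disclosure_in_Dcal.
move=> th Th; rewrite lee_fin ler_wpM2r ?f_ge0 //.
exact: pi_d_le_full_disclosure.
Qed.

Lemma Gamma_le_full_disclosure d' : in_Dcal pt thl thh ebar d' ->
  Pi_of pt f thl thh ebar d <= Pi_of pt f thl thh ebar d' ->
  Gamma_of pt f thl thh ebar d <= Gamma_of pt f thl thh ebar d'.
Proof.
move=> Dd Pi_le.
have := @le_integral_ae_eq _ _ _ lebesgue_measure (Thset thl thh)
  (fun th => pi_d pt ebar d' th * f th)%R (fun th => pi_d pt ebar d th * f th)%R
  (measurable_itv _) (integrable_pi_d Dd) (integrable_pi_d full_disclosure_in_Dcal).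
move=> /(_ (fun th Th => ler_wpM2r (f_ge0 (mem_set Th))
  (pi_d_le_full_disclosure Dd (mem_set Th))) Pi_le) pi_ae_eq.
have gamma_f_ge0 d'' th : in_Dcal pt thl thh ebar d'' -> Thset thl thh th ->
    0 <= (gamma_d pt ebar d'' th * f th)%:E.
  by move=> Dd'' /mem_set Th; rewrite lee_fin mulr_ge0 ?f_ge0 ?(gamma_d_ge0 Dd'' Th).
apply: ae_ge0_le_integral_nonmeasurable.
- by move=> th; apply: gamma_f_ge0 full_disclosure_in_Dcal.
- by move=> th; apply: gamma_f_ge0 Dd.
apply: filterS pi_ae_eq => th pi_eq Th; rewrite lee_fin.
have [->|f_neq0] := eqVneq (f th) 0%R; first by rewrite !mulr0.
rewrite ler_wpM2r ?f_ge0 ?inE //; apply: gamma_d_le_full_disclosure Dd _ _.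
  exact: mem_set.
apply: (mulIf f_neq0); exact: pi_eq.
Qed.

End full_disclosure.

Theorem proposition3 (R : realType) (ebar thl thh : R)
  (f : R -> R) (pt : R -> R -> R -> R) :
  0 < ebar ->
  thl < thh ->
  (* f is a continuous density on Theta *)
  {within Thset thl thh, continuous f} ->
  (forall t, t \in Thset thl thh -> 0 <= f t) ->
  (\int[lebesgue_measure]_(t in Thset thl thh) (f t)%:E)%E = 1%E ->
  (* pi~ continuous on Theta x E x E *)
  {within [set p : (R * R) * R | p.1.1 \in Thset thl thh /\ p.1.2 \in Eset ebar
                                 /\ p.2 \in Eset ebar], continuous (pt3 pt)} ->
  (* pi~ is C^2 on the interior of Theta x E x E *)
  C2_on [set p : (R * R) * R | p.1.1 \in `]thl, thh[%classic /\ p.1.2 \in `]0, ebar[%classic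
                               /\ p.2 \in `]0, ebar[%classic ] (pt3 pt) ->
  (* pi~ strictly increasing in e, strictly decreasing in e~ *)
  (forall th et e1 e2, th \in Thset thl thh -> et \in Eset ebar ->
     e1 \in Eset ebar -> e2 \in Eset ebar -> e1 < e2 -> pt th e1 et < pt th e2 et) ->
  (forall th e et1 et2, th \in Thset thl thh -> e \in Eset ebar ->
     et1 \in Eset ebar -> et2 \in Eset ebar -> et1 < et2 -> pt th e et2 < pt th e et1) ->
  (* pi(theta, .) strictly concave on E *)
  (forall th e1 e2 (l : R), th \in Thset thl thh -> e1 \in Eset ebar -> e2 \in Eset ebar ->
     e1 != e2 -> 0 < l < 1 ->
     l * pi_diag pt th e1 + (1 - l) * pi_diag pt th e2
       < pi_diag pt th (l * e1 + (1 - l) * e2)) ->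
  (* pi(theta, 0) < pi(theta, ebar) *)
  (forall th, th \in Thset thl thh -> pi_diag pt th 0 < pi_diag pt th ebar) ->
  forall d : R -> R, full_disclosure pt thl thh ebar d ->
    pareto_efficient pt f thl thh ebar d /\
    (forall d', in_Dcal pt thl thh ebar d' ->
       (Pi_of pt f thl thh ebar d' <= Pi_of pt f thl thh ebar d)%E).
Proof.
move=> ebar_gt0 _ f_cont f_ge0 _ pt_cont _ _ _ _ _ d fd.
have {ebar_gt0} ebar_ge0 := ltW ebar_gt0.
have Pi_le := Pi_le_full_disclosure ebar_ge0 pt_cont f_cont f_ge0 fd.
have Dd := full_disclosure_in_Dcal ebar_ge0 pt_cont fd.
split=> //; split=> // -[d' [Dd' [Pi_ge [_ [Pi_lt|Gamma_lt]]]]].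
  by move: Pi_lt; rewrite ltNge Pi_le.
have Gamma_ge := Gamma_le_full_disclosure ebar_ge0 pt_cont f_cont f_ge0 fd Dd' Pi_ge.
by move: Gamma_lt; rewrite ltNge Gamma_ge.
Qed.
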